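(* Let $k\ge 2$ be a constant integer. There is a constant $C>0$ such that for all integers $1\le j\le n$ and all positive integers $q$ the following holds: letting $x$ be the vertex born in round $j$ of the random $k$-tree process, conditional on any realization of $G(j)$, the probability that $x$ has degree greater than $k+q(n/j)^{(k-1)/k}$ in $G(n)$ is at most $C\,q\sqrt{q}\,e^{-q}$.
   Context: Random $k$-tree process: $G(0)$ is a clique on $k$ vertices; for $t\ge1$, $G(t)$ is obtained from $G(t-1)$ by choosing a $k$-clique of $G(t-1)$ uniformly at random, creating a new vertex (said to be born in round $t$), and joining it to all vertices of the chosen clique. *)

From mathcomp Require Import all_boot.
From Stdlib Require Import Reals.

Set Implicit Arguments.
Unset Strict Implicit.
Unset Printing Implicit Defensive.

(* A graph on vertex set {0,...,nv-1}: (nv, list of edges). *)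
Definition graph := (nat * seq (nat * nat))%type.

Definition adj (g : graph) (u v : nat) : bool :=
  ((u, v) \in g.2) || ((v, u) \in g.2).

Fixpoint ksubsets (k : nat) (s : seq nat) : seq (seq nat) :=
  match k, s with
  | 0, _ => [:: [::]]
  | S _, [::] => [::]
  | S k', x :: s' => map (cons x) (ksubsets k' s') ++ ksubsets k s'
  end.

Fixpoint pairwise_adj (g : graph) (s : seq nat) : bool :=
  match s with
  | [::] => true
  | x :: s' => all (adj g x) s' && pairwise_adj g s'
  end.

(* the k-cliques of g (each listed once, as an increasing list of vertices) *)
Definition kcliques (k : nat) (g : graph) : seq (seq nat) :=
  [seq c <- ksubsets k (iota 0 g.1) | pairwise_adj g c].

Definition G0 (k : nat) : graph :=
  (k, [seq (u, v) | u <- iota 0 k, v <- iota u.+1 (k - u.+1)]).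

Definition step (g : graph) (c : seq nat) : graph :=
  (g.1.+1, g.2 ++ [seq (v, g.1) | v <- c]).

Definition sumR (s : seq R) : R := foldr Rplus 0%R s.

(* Probability, for the random k-tree process, that the trajectory
   [G(0); ...; G(n)] satisfies E, starting from history h (h = [G(0);...;G(t)])
   and running m more rounds; each round picks a k-clique of the current graph
   uniformly at random. *)
Fixpoint prT (k m : nat) (h : seq graph) (E : seq graph -> bool) : R :=
  match m with
  | 0 => if E h then 1%R else 0%R
  | S m' =>
      let g := last (G0 k) h in
      let cs := kcliques k g in
      (sumR [seq prT k m' (rcons h (step g c)) E | c <- cs] / INR (size cs))%R
  end.

Definition probK (k n : nat) (E : seq graph -> bool) : R := prT k n [:: G0 k] E.

Definition Gat (k : nat) (h : seq graph) (t : nat) : graph := nth (G0 k) h t.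

Definition sameG (g H : graph) : bool :=
  (g.1 == H.1) && all (fun e => adj H e.1 e.2) g.2 && all (fun e => adj g e.1 e.2) H.2.

Definition degree (g : graph) (x : nat) : nat := count (adj g x) (iota 0 g.1).

(* vertex born in round j >= 1 (initial vertices are 0..k-1) *)
Definition born (k j : nat) : nat := (k + j - 1)%N.

(* Let x be born in round j and write pot := deg x - k + k/(k-1).  The k-cliques of G(t)
   containing x number exactly (k-1) pot, while G(t) has exactly 1 + kt k-cliques, so each
   round raises pot by one with probability (k-1) pot / (1 + kt).  For the rising factorial
   pot^(m) = pot (pot+1) ... (pot+m-1) this makes E[pot^(m)] grow by the deterministic factor
   1 + m(k-1)/(1 + kt) per round.  For m = kp these factors telescope, over rounds j..n, to at
   most (n/j)^(p(k-1)); as pot = k/(k-1) <= 2 at birth, E[pot^(m)] <= (m+1)! (n/j)^(p(k-1)) in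
   G(n).  Markov's inequality at the threshold q (n/j)^((k-1)/k) bounds the tail by
   (m+1)!/q^m, and with q <= m < q + k the Stirling-type bound q! <= e sqrt(q) q^q e^(-q)
   turns this into e (k+1)^k q sqrt(q) e^(-q). *)

From mathcomp Require Import all_boot.
From Stdlib Require Import Reals Lra Lia.
From mathcomp Require Import zify.
From Coquelicot Require Rcomplements Coquelicot.

Lemma cons_injr {T : Type} (x : T) : injective (cons x).
Proof. by move=> s1 s2 []. Qed.

Lemma size_filter_predC1 {T : eqType} (s : seq T) x :
  uniq s -> x \in s -> size (filter (predC1 x) s) = (size s).-1.
Proof. by move=> s_uniq xs; rewrite -rem_filter // size_rem. Qed.

Lemma pairwise_adjE g s : pairwise_adj g s = pairwise (adj g) s.
Proof. by elim: s => //= x s ->. Qed.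

Lemma ksubsetsP k l s : (s \in ksubsets k l) = subseq s l && (size s == k).
Proof.
elim: l k s => [|x l IH] [|k] [|y s] //=; rewrite ?inE ?andbF // mem_cat IH.
  by rewrite andbF orbF; apply/negbTE/mapP => -[].
rewrite eqSS; case: (eqVneq y x) => [->|ne].
  rewrite (mem_map (cons_injr x)) IH orb_idr // => /andP[sub /eqP<-].
  by rewrite eqxx andbT (subseq_trans (subseq_cons s x)).
by rewrite (negbTE (_ : y :: s \notin _)) //; apply/mapP => -[? _ [/eqP]]; rewrite (negbTE ne).
Qed.

Lemma ksubsets_uniq k l : uniq l -> uniq (ksubsets k l).
Proof.
elim: l k => [|x l IH] [|k] //= /andP[xl ul].
rewrite cat_uniq (map_inj_uniq (cons_injr x)) !IH //= andbT.
apply/hasPn => s; rewrite ksubsetsP => /andP[sl _]; apply/mapP => -[s' _ es].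
by move: sl; rewrite es => /mem_subseq/(_ x (mem_head _ _)); apply/negP.
Qed.

Lemma kcliquesP k g s :
  (s \in kcliques k g) = [&& subseq s (iota 0 g.1), size s == k & pairwise (adj g) s].
Proof. by rewrite /kcliques mem_filter ksubsetsP pairwise_adjE andbC andbA. Qed.

Lemma kcliques_uniq k g : uniq (kcliques k g).
Proof. exact/filter_uniq/ksubsets_uniq/iota_uniq. Qed.

Lemma pairwise_mem {T : eqType} {r : rel T} {s x y} :
  pairwise r s -> x \in s -> y \in s -> x != y -> r x y || r y x.
Proof.
elim: s => //= z s IH /andP[rz rs].
rewrite !inE => /predU1P[->|xs] /predU1P[->|ys]; rewrite ?eqxx // => xy.
- by rewrite (allP rz).
- by rewrite (allP rz) ?orbT.
- exact: IH rs xs ys xy.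
Qed.

Lemma adjC g u v : adj g u v = adj g v u.
Proof. by rewrite /adj orbC. Qed.

Lemma adj_step g c u v :
  adj (step g c) u v = [|| adj g u v, (u \in c) && (v == g.1) | (v \in c) && (u == g.1)].
Proof.
rewrite /adj /= !mem_cat.
have mem_new a b : ((a, b) \in [seq (w, g.1) | w <- c]) = (a \in c) && (b == g.1).
  by apply/mapP/andP => [[w wc [-> ->]] | [ac /eqP->]]; [rewrite eqxx | exists a].
by rewrite !mem_new -!orbA; congr (_ || _); rewrite orbCA.
Qed.

Definition edges_bounded (g : graph) : bool :=
  all (fun e => (e.1 < g.1) && (e.2 < g.1)) g.2.

Lemma adj_bounded {g u v} : edges_bounded g -> adj g u v -> (u < g.1) && (v < g.1).
Proof. by move=> /allP gb /orP[] /gb /andP[-> ->]. Qed.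

Lemma iotaSr n : iota 0 n.+1 = rcons (iota 0 n) n.
Proof. by rewrite -addn1 iotaD cats1. Qed.

Lemma step_vertices g c : (step g c).1 = g.1.+1.
Proof. by []. Qed.

Definition cliques_at k g x : nat := count (fun s => x \in s) (kcliques k g).

Section Step.

Context {k : nat} {g : graph} {c : seq nat}.
Hypothesis g_bounded : edges_bounded g.
Hypothesis c_clique : c \in kcliques k g.

Local Notation n := g.1.
Local Notation g' := (step g c).

Let c_sub : subseq c (iota 0 n).
Proof. by move: c_clique; rewrite kcliquesP => /and3P[]. Qed.

Let c_size : size c = k.
Proof. by move: c_clique; rewrite kcliquesP => /and3P[_ /eqP]. Qed.

Let c_pairwise : pairwise (adj g) c.
Proof. by move: c_clique; rewrite kcliquesP => /and3P[]. Qed.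

Let c_uniq : uniq c.
Proof. exact: subseq_uniq c_sub (iota_uniq _ _). Qed.

Let c_lt {v} : v \in c -> v < n.
Proof. by move=> /(mem_subseq c_sub); rewrite mem_iota. Qed.

Let new_notin_c : n \notin c.
Proof. by apply/negP => /c_lt; rewrite ltnn. Qed.

Lemma edges_bounded_step : edges_bounded g'.
Proof.
rewrite /edges_bounded all_cat; apply/andP; split; apply/allP => e.
  by move=> /(allP g_bounded) /andP[e1 e2]; rewrite !ltnS ltnW // ltnW.
by move=> /mapP[v /c_lt vn ->]; rewrite /= ltnSn ltnS ltnW.
Qed.

Lemma adj_new u : adj g u n = false.
Proof. by apply/negP => /(adj_bounded g_bounded) /andP[_]; rewrite ltnn. Qed.

Lemma degree_step_old {x} : x < n -> degree g' x = degree g x + (x \in c).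
Proof.
move=> xn; rewrite /degree [g'.1]/= iotaSr -cats1 count_cat /= addn0; congr (_ + _).
  apply: eq_in_count => u; rewrite mem_iota => /andP[_ un].
  by rewrite adj_step (ltn_eqF un) (ltn_eqF xn) !andbF !orbF.
by rewrite adj_step adj_new eqxx (ltn_eqF xn) andbF orbF andbT; case: (x \in c).
Qed.

Lemma degree_step_new : degree g' n = k.
Proof.
rewrite /degree [g'.1]/= iotaSr -cats1 count_cat /= addn0.
rewrite adj_step adj_new eqxx (negbTE new_notin_c) /= addn0 -c_size.
rewrite -size_filter; apply/perm_size/uniq_perm; rewrite ?filter_uniq ?iota_uniq // => u.
rewrite mem_filter adj_step adjC adj_new eqxx andbT (negbTE new_notin_c) /= mem_iota.
by case: (boolP (u \in c)) => [/c_lt un|]; rewrite ?andbF // (ltn_eqF un) un.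
Qed.

Lemma kcliques_step_old s : s \in kcliques k g -> s \in kcliques k g'.
Proof.
rewrite !kcliquesP => /and3P[sub -> pw]; rewrite step_vertices iotaSr.
rewrite (subseq_trans sub (subseq_rcons _ _)) /=.
by apply: sub_pairwise pw => u v uv; rewrite adj_step uv.
Qed.

Lemma kcliques_step_back s : s \in kcliques k g' -> n \notin s -> s \in kcliques k g.
Proof.
rewrite !kcliquesP step_vertices => /and3P[sub -> pw] ns.
have s_lt : all (fun u => u < n) s.
  apply/allP => u us; move: (mem_subseq sub us); rewrite mem_iota ltnS /= leq_eqVlt.
  by case/predU1P => // un; rewrite -un us in ns.
apply/andP; split.
  have : subseq s [seq u <- iota 0 n.+1 | u < n] by rewrite subseq_filter s_lt.
  rewrite iotaSr filter_rcons ltnn (all_filterP _) //.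
  by apply/allP => u; rewrite mem_iota.
apply: (sub_in_pairwise _ s_lt pw) => u v un vn.
by rewrite adj_step (ltn_eqF un) (ltn_eqF vn) !andbF !orbF.
Qed.

Definition swap_new v : seq nat := rcons (filter (predC1 v) c) n.

Lemma mem_swap_new v u : (u \in swap_new v) = (u == n) || (u != v) && (u \in c).
Proof. by rewrite mem_rcons inE mem_filter. Qed.

Let size_filter_neq {v} : v \in c -> size (filter (predC1 v) c) = k.-1.
Proof. by move=> vc; rewrite size_filter_predC1 ?c_size. Qed.

Lemma swap_new_clique v : 0 < k -> v \in c -> swap_new v \in kcliques k g'.
Proof.
move=> k_gt0 vc; rewrite kcliquesP step_vertices iotaSr /swap_new -!cats1 subseq_cat2r.
rewrite (subseq_trans (filter_subseq _ _) c_sub) size_cat size_filter_neq //= addn1.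
rewrite prednK // eqxx cats1 pairwise_rcons; apply/andP; split=> //; apply/andP; split.
  by apply/allP => u; rewrite mem_filter adj_step eqxx => /andP[_ ->]; rewrite orbT.
by apply/pairwise_filter/(sub_pairwise _ c_pairwise) => a b ab; rewrite adj_step ab.
Qed.

Lemma kcliques_step_new {s} : 0 < k -> s \in kcliques k g' -> n \in s ->
  exists2 v, v \in c & s = swap_new v.
Proof.
move=> k_gt0 s_clique ns; move: (s_clique); rewrite kcliquesP => /and3P[sub /eqP s_size pw].
have s_uniq : uniq s by apply: subseq_uniq sub (iota_uniq _ _).
pose s' := filter (predC1 n) s.
have s'_c : {subset s' <= c}.
  move=> u; rewrite mem_filter => /andP[un us].
  have := pairwise_mem pw us ns un.
  by rewrite adjC orbb adj_step adjC adj_new eqxx andbT (negbTE new_notin_c).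
have s'_size : size s' = k.-1 by rewrite size_filter_predC1 ?s_size.
have [v vc vs'] : exists2 v, v \in c & v \notin s'.
  apply/hasP/negPn/negP => /hasPn c_s'.
  have := uniq_leq_size c_uniq (fun u uc => negbNE (c_s' u uc)).
  by rewrite c_size s'_size; lia.
have s'_swap : {subset s' <= filter (predC1 v) c}.
  move=> u us'; rewrite mem_filter (s'_c _ us') andbT /=.
  by apply: contraNneq vs' => <-.
have [|_ s'_eq] := uniq_min_size (filter_uniq (predC1 n) s_uniq) s'_swap.
  by rewrite size_filter_neq // -/s' s'_size.
exists v => //; apply: (irr_sorted_eq ltn_trans ltnn).
- exact: subseq_sorted ltn_trans _ _ sub (iota_ltn_sorted _ _).
- rewrite (sorted_pairwise ltn_trans) pairwise_rcons; apply/andP; split.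
    by apply/allP => u; rewrite mem_filter => /andP[_ /c_lt].
  apply/pairwise_filter; rewrite -(sorted_pairwise ltn_trans).
  exact: subseq_sorted ltn_trans _ _ c_sub (iota_ltn_sorted _ _).
- move=> u; rewrite mem_swap_new; case: (eqVneq u n) => [->|un] //=.
  by have := s'_eq u; rewrite !mem_filter /= un.
Qed.

Lemma kcliques_step : 0 < k -> perm_eq (kcliques k g') (kcliques k g ++ map swap_new c).
Proof.
move=> k_gt0; apply: uniq_perm; rewrite ?kcliques_uniq //.
  rewrite cat_uniq kcliques_uniq; apply/and3P; split=> //.
    apply/hasPn => _ /mapP[v _ ->]; apply/negP; rewrite kcliquesP => /and3P[sub _ _].
    by move/mem_subseq: sub => /(_ n); rewrite mem_swap_new eqxx mem_iota ltnn andbF => /(_ isT).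
  rewrite map_inj_in_uniq // => v w vc wc vw; apply/eqP; apply/negPn/negP => nvw.
  have : v \in swap_new w by rewrite mem_swap_new nvw vc orbT.
  by rewrite -vw mem_swap_new eqxx (ltn_eqF (c_lt vc)).
move=> s; rewrite mem_cat; apply/idP/orP => [s_clique|[/kcliques_step_old //|/mapP[v vc ->]]].
  case: (boolP (n \in s)) => ns; last by left; exact: kcliques_step_back.
  by right; have [v vc ->] := kcliques_step_new k_gt0 s_clique ns; exact: map_f.
exact: swap_new_clique.
Qed.

Lemma size_kcliques_step : 0 < k -> size (kcliques k g') = size (kcliques k g) + k.
Proof. by move=> /kcliques_step/perm_size->; rewrite size_cat size_map c_size. Qed.

Lemma cliques_at_step x : 0 < k ->
  cliques_at k g' x = cliques_at k g x + count (fun v => x \in swap_new v) c.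
Proof. by rewrite /cliques_at => /kcliques_step/permP->; rewrite count_cat count_map. Qed.

Lemma cliques_at_step_old {x} : 0 < k -> x < n ->
  cliques_at k g' x = cliques_at k g x + (k - 1) * (x \in c).
Proof.
move=> k_gt0 xn; rewrite cliques_at_step //; congr (_ + _).
rewrite (eq_count (a2 := fun v => (x != v) && (x \in c))); last first.
  by move=> v; rewrite mem_swap_new (ltn_eqF xn).
case: (boolP (x \in c)) => xc; rewrite ?muln1 ?muln0.
  by rewrite subn1 -(size_filter_neq xc) size_filter; apply: eq_count => v /=; rewrite andbT eq_sym.
by rewrite (eq_count (a2 := pred0)) ?count_pred0 // => v; rewrite andbF.
Qed.

Lemma cliques_at_step_new : 0 < k -> cliques_at k g' n = k.
Proof.
move=> k_gt0; rewrite cliques_at_step // -c_size -[RHS]add0n -(count_predT c); congr (_ + _).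
  apply/eqP; rewrite -leqn0 leqNgt -has_count; apply/hasPn => s; rewrite kcliquesP.
  by case/and3P => /mem_subseq sub _ _; apply/negP => /sub; rewrite mem_iota ltnn andbF.
by apply: eq_count => v; rewrite mem_swap_new eqxx.
Qed.

End Step.

Lemma edges_bounded_G0 k : edges_bounded (G0 k).
Proof.
apply/allP => _ /allpairsPdep[u [v [+ + ->]]] /=; rewrite !mem_iota /= => uk /andP[uv].
by rewrite subnKC // => ->; rewrite uk.
Qed.

Lemma adj_G0 k u v : u < v < k -> adj (G0 k) u v.
Proof.
move=> /andP[uv vk]; apply/orP; left; apply/allpairsPdep; exists u, v.
by rewrite !mem_iota /= (ltn_trans uv vk) uv subnKC ?(leq_trans uv (ltnW vk)).
Qed.

Lemma size_kcliques_G0 k : size (kcliques k (G0 k)) = 1.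
Proof.
apply: (@perm_size _ _ [:: iota 0 k]); apply: uniq_perm; rewrite ?kcliques_uniq // => s.
rewrite kcliquesP inE; apply/and3P/eqP => [[sub /eqP s_size _]|->].
  by apply/eqP; rewrite -(size_subseq_leqif sub).2 s_size size_iota.
split; rewrite ?subseq_refl ?size_iota //.
apply: (@sub_in_pairwise _ (gtn k) ltn); last by rewrite -(sorted_pairwise ltn_trans) iota_ltn_sorted.
  by move=> u v _ vk uv; apply: adj_G0; rewrite [u < v]uv.
by apply/allP => u; rewrite mem_iota.
Qed.

Definition ktree_inv k (g : graph) t : Prop :=
  [/\ g.1 = k + t, edges_bounded g & size (kcliques k g) = 1 + k * t].

Definition vertex_inv k (g : graph) x : Prop :=
  [/\ x < g.1, k <= degree g x & cliques_at k g x + (k - 1) * k = k + (k - 1) * degree g x].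

Lemma ktree_inv_G0 k : ktree_inv k (G0 k) 0.
Proof. by split; rewrite ?addn0 ?muln0 ?edges_bounded_G0 ?size_kcliques_G0. Qed.

Lemma ktree_inv_step {k g t c} : 0 < k -> ktree_inv k g t -> c \in kcliques k g ->
  ktree_inv k (step g c) t.+1.
Proof.
move=> k_gt0 [gv gb gs] cg; split; first by rewrite step_vertices gv addnS.
  exact: edges_bounded_step gb cg.
by rewrite (size_kcliques_step gb cg) // gs mulnS [k + _]addnC addnA.
Qed.

Lemma vertex_inv_step {k g x c} : 0 < k -> edges_bounded g -> vertex_inv k g x ->
  c \in kcliques k g -> vertex_inv k (step g c) x.
Proof.
move=> k_gt0 gb [xn xdeg xcl] cg; split.
- by rewrite step_vertices ltnW.
- by rewrite (degree_step_old gb xn) (leq_trans xdeg) ?leq_addr.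
rewrite (cliques_at_step_old gb cg) // (degree_step_old gb xn) mulnDr.
by rewrite -addnA [_ * (x \in c) + _]addnC addnA xcl addnA.
Qed.

Lemma vertex_inv_new {k g c} : 0 < k -> edges_bounded g -> c \in kcliques k g ->
  vertex_inv k (step g c) g.1.
Proof.
move=> k_gt0 gb cg; split; rewrite ?step_vertices ?(degree_step_new gb cg) //.
by rewrite (cliques_at_step_new gb cg) // addnC.
Qed.

Open Scope R_scope.

Definition mean {T : Type} (s : seq T) (f : T -> R) : R := sumR (map f s) / INR (size s).

Lemma sumR_le {T : eqType} (s : seq T) (f1 f2 : T -> R) :
  {in s, forall x, f1 x <= f2 x} -> sumR (map f1 s) <= sumR (map f2 s).
Proof.
elim: s => [|x s IH] le12 /=; first lra.
apply: Rplus_le_compat; first by apply: le12; rewrite mem_head.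
by apply: IH => y ys; apply: le12; rewrite inE ys orbT.
Qed.

Lemma sumR_scal {T : Type} (s : seq T) a (f : T -> R) :
  sumR [seq a * f x | x <- s] = a * sumR (map f s).
Proof. by elim: s => [|x s IH] /=; rewrite ?IH; ring. Qed.

Lemma sumR_cst {T : Type} (s : seq T) a : sumR [seq a | _ <- s] = INR (size s) * a.
Proof.
elim: s => [|x s IH]; first by rewrite /= Rmult_0_l.
by rewrite [size _]/= S_INR -[map _ _]/(a :: _) [sumR _]/= IH; ring.
Qed.

Lemma sumR_if {T : Type} (s : seq T) (P : pred T) a b :
  sumR [seq if P x then a else b | x <- s] = INR (count P s) * a + INR (count (predC P) s) * b.
Proof.
elim: s => [|x s IH] /=; first ring.
by rewrite IH !plus_INR; case: (P x) => /=; ring.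
Qed.

Lemma mean_le {T : eqType} (s : seq T) (f1 f2 : T -> R) :
  {in s, forall x, f1 x <= f2 x} -> mean s f1 <= mean s f2.
Proof.
move=> le12; apply: Rmult_le_compat_r; last exact: sumR_le.
by case: (size s) => [|m]; rewrite ?Rinv_0; [lra | apply/Rlt_le/Rinv_0_lt_compat/lt_0_INR; lia].
Qed.

Lemma eq_in_mean {T : eqType} (s : seq T) (f1 f2 : T -> R) :
  {in s, f1 =1 f2} -> mean s f1 = mean s f2.
Proof. by move=> /eq_in_map eq12; rewrite /mean eq12. Qed.

Lemma mean_scal {T : Type} (s : seq T) a (f : T -> R) :
  mean s (fun x => a * f x) = a * mean s f.
Proof. by rewrite /mean sumR_scal /Rdiv Rmult_assoc. Qed.

Lemma mean_if {T : Type} (s : seq T) (P : pred T) a b :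
  mean s (fun x => if P x then a else b) =
  (INR (count P s) * a + INR (count (predC P) s) * b) / INR (size s).
Proof. by rewrite /mean sumR_if. Qed.

Lemma mean_cst {T : Type} (s : seq T) a : (0 < size s)%nat -> mean s (fun _ => a) = a.
Proof.
move=> s_gt0; rewrite /mean sumR_cst /Rdiv Rmult_comm -Rmult_assoc Rinv_l ?Rmult_1_l //.
by apply: not_0_INR; lia.
Qed.

Fixpoint expect k r (g : graph) (f : graph -> R) : R :=
  if r is r'.+1 then mean (kcliques k g) (fun c => expect k r' (step g c) f) else f g.

Section Expectation.

Variable k : nat.
Hypothesis k_gt0 : (0 < k)%nat.

Lemma expect_le_inv (P : graph -> Prop) (f1 f2 : graph -> R) :
  (forall g c, P g -> c \in kcliques k g -> P (step g c)) ->
  (forall g, P g -> f1 g <= f2 g) -> forall r g, P g -> expect k r g f1 <= expect k r g f2.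
Proof.
move=> P_step le12; elim=> [|r IH] g Pg /=; first exact: le12.
by apply: mean_le => c cg; apply/IH/P_step.
Qed.

Lemma expect_scal r g a f : expect k r g (fun g => a * f g) = a * expect k r g f.
Proof.
elim: r g => [|r IH] g //=.
by rewrite -mean_scal; apply: eq_in_mean => c _.
Qed.

Lemma expect_cst {r g t} a : ktree_inv k g t -> expect k r g (fun _ => a) = a.
Proof.
elim: r g t => [|r IH] g t g_inv //=.
have [_ _ g_size] := g_inv.
rewrite -{2}(mean_cst (kcliques k g) a) ?g_size //; apply: eq_in_mean => c cg /=.
exact: IH (ktree_inv_step k_gt0 g_inv cg).
Qed.

End Expectation.

Lemma prT_ext k r h (E1 E2 : seq graph -> bool) :
  (forall t, size t = r -> E1 (h ++ t) = E2 (h ++ t)) -> prT k r h E1 = prT k r h E2.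
Proof.
elim: r h => [|r IH] h E12 /=; first by rewrite -(cats0 h) E12.
apply: eq_in_mean => c _; apply: IH => t t_size.
by rewrite cat_rcons E12 //= t_size.
Qed.

Lemma prT_last k r h (f : pred graph) :
  prT k r h (fun h => f (last (G0 k) h)) =
  expect k r (last (G0 k) h) (fun g => if f g then 1 else 0).
Proof.
by elim: r h => [|r IH] h //=; apply: eq_in_mean => c _; rewrite IH last_rcons.
Qed.

(* Conditioning on the first d rounds: prT k (d + r) h is an average of prT k r h' over the
   histories h' extending h by d rounds, and such averages preserve the ratio bound. *)
Lemma prT_le_scale k (Q : seq graph -> Prop) (E1 E2 : seq graph -> bool) a d r h :
  0 <= a ->
  (forall h c, Q h -> c \in kcliques k (last (G0 k) h) -> Q (rcons h (step (last (G0 k) h) c))) ->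
  (forall h', Q h' -> size h' = (size h + d)%nat -> prT k r h' E1 <= a * prT k r h' E2) ->
  Q h -> prT k (d + r) h E1 <= a * prT k (d + r) h E2.
Proof.
move=> a_ge0 Q_step; elim: d h => [|d IH] h le12 Qh; first by apply: le12; rewrite ?addn0.
rewrite addSn /= -mean_scal; apply: mean_le => c cg; apply: IH; last exact: Q_step.
by move=> h' Qh' h'_size; apply: le12; rewrite // h'_size size_rcons addSnnS.
Qed.

Fixpoint rising (a : R) (m : nat) : R := if m is m'.+1 then rising a m' * (a + INR m') else 1.

Lemma risingS a m : rising a m.+1 = rising a m * (a + INR m).
Proof. by []. Qed.

Lemma rising_ge0 a m : 0 <= a -> 0 <= rising a m.
Proof.
move=> a_ge0; elim: m => [|m IH] /=; first lra.
by apply: Rmult_le_pos => //; have := pos_INR m; lra.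
Qed.

Lemma rising_gt0 {a} m : 0 < a -> 0 < rising a m.
Proof.
move=> a_gt0; elim: m => [|m IH] /=; first lra.
by apply: Rmult_lt_0_compat => //; have := pos_INR m; lra.
Qed.

Lemma rising_le a b m : 0 <= a <= b -> rising a m <= rising b m.
Proof.
move=> ab; elim: m => [|m IH] /=; first lra.
have m_ge0 := pos_INR m; apply: Rmult_le_compat => //; first apply: rising_ge0; lra.
Qed.

Lemma pow_le_rising a m : 0 <= a -> a ^ m <= rising a m.
Proof.
move=> a_ge0; elim: m => [|m IH] /=; first lra.
have m_ge0 := pos_INR m; rewrite Rmult_comm; apply: Rmult_le_compat => //; first apply: pow_le; lra.
Qed.

Lemma rising_shift a m : rising (a + 1) m * a = rising a m * (a + INR m).
Proof.
elim: m => [|m IH]; first by rewrite /=; ring.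
rewrite !risingS S_INR.
by transitivity (rising (a + 1) m * a * (a + 1 + INR m)); [ring | rewrite IH; ring].
Qed.

Lemma rising_two m : rising 2 m = INR m.+1`!.
Proof.
elim: m => [|m IH]; first by rewrite /=; ring.
by rewrite risingS IH !factS -!multE !mult_INR !S_INR; ring.
Qed.

Lemma rising_ratio a b e m : 0 < a <= b -> 0 <= e ->
  rising (b + e) m <= (b / a) ^ m * rising (a + e) m.
Proof.
move=> ab e_ge0; elim: m => [|m IH] /=; first lra.
have m_ge0 := pos_INR m.
have ba_ge1 : 1 <= b / a by apply/Rcomplements.Rle_div_r; lra.
have step : b + e + INR m <= b / a * (a + e + INR m).
  have -> : b / a * (a + e + INR m) = b + b / a * (e + INR m) by field; lra.
  nra.
apply: Rle_trans (_ : (b / a) ^ m * rising (a + e) m * (b / a * (a + e + INR m)) <= _); last first.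
  by right; ring.
by apply: Rmult_le_compat => //; [apply: rising_ge0 | ]; lra.
Qed.

Definition pot k (x : nat) (g : graph) : R := INR (degree g x) - INR k + INR k / INR (k - 1).

Definition drift k m t : R := 1 + INR m * INR (k - 1) / INR (1 + k * t).

Fixpoint drift_prod k m t r : R := if r is r'.+1 then drift k m t * drift_prod k m t.+1 r' else 1.

Section Potential.

Variable k : nat.
Hypothesis k_gt1 : (1 < k)%nat.

Let k1_gt0 : 0 < INR (k - 1).
Proof. by apply: lt_0_INR; lia. Qed.

Lemma excess_lt_pot g x : INR (degree g x) - INR k < pot k x g.
Proof.
rewrite /pot; have : 0 < INR k / INR (k - 1) by apply: Rdiv_lt_0_compat => //; apply: lt_0_INR; lia.
lra.
Qed.

Lemma pot_gt0 {g x} : (k <= degree g x)%nat -> 0 < pot k x g.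
Proof. by move=> /leP/le_INR deg_ge; have := excess_lt_pot g x; lra. Qed.

Lemma cliques_at_pot {g x} : vertex_inv k g x -> INR (cliques_at k g x) = INR (k - 1) * pot k x g.
Proof.
move=> [_ _ /(f_equal INR)]; rewrite !plus_INR !mult_INR /pot => xcl.
apply: (Rplus_eq_reg_r (INR (k - 1) * INR k)); rewrite xcl; field; lra.
Qed.

Lemma pot_step g x c : edges_bounded g -> (x < g.1)%nat ->
  pot k x (step g c) = pot k x g + (if x \in c then 1 else 0).
Proof.
by move=> gb xn; rewrite /pot (degree_step_old gb xn) plus_INR; case: (x \in c) => /=; ring.
Qed.

Lemma mean_rising_pot {g x t} m : ktree_inv k g t -> vertex_inv k g x ->
  mean (kcliques k g) (fun c => rising (pot k x (step g c)) m) = rising (pot k x g) m * drift k m t.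
Proof.
move=> [gn gb g_size] x_inv; have [xn xdeg _] := x_inv.
set a := pot k x g; have a_gt0 : 0 < a := pot_gt0 xdeg.
rewrite (@eq_in_mean _ _ _ (fun c : seq nat => if x \in c then rising (a + 1) m else rising a m)); last first.
  by move=> c _ /=; rewrite pot_step //; case: (x \in c); rewrite ?Rplus_0_r.
rewrite mean_if -/(cliques_at k g x); set Y := INR (count (predC _) _).
have T_eq : INR (cliques_at k g x) + Y = INR (1 + k * t).
  by rewrite /Y /cliques_at -plus_INR plusE count_predC g_size.
have T_gt0 : 0 < INR (1 + k * t) by apply: lt_0_INR; lia.
have shift : INR (k - 1) * a * rising (a + 1) m = INR (k - 1) * rising a m * (a + INR m).
  by rewrite Rmult_assoc [a * _]Rmult_comm rising_shift; ring.
rewrite /drift g_size -T_eq (cliques_at_pot x_inv) -/a shift.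
by field; rewrite -(cliques_at_pot x_inv) T_eq; lra.
Qed.

Lemma indicator_le_rising g x a m : 0 < a -> (k <= degree g x)%nat ->
  (if Rlt_dec (INR k + a) (INR (degree g x)) then 1 else 0) <= / a ^ m * rising (pot k x g) m.
Proof.
move=> a_gt0 xdeg; have pot_pos := pot_gt0 xdeg.
have am_gt0 : 0 < / a ^ m by apply/Rinv_0_lt_compat/pow_lt.
case: (Rlt_dec _ _) => [lt_deg | _] /=; last by apply: Rmult_le_pos; [lra | exact/Rlt_le/rising_gt0].
have a_lt : a < pot k x g by have := excess_lt_pot g x; lra.
rewrite -(Rinv_l (a ^ m)); last exact/Rgt_not_eq/pow_lt.
apply: Rmult_le_compat_l; first lra.
apply: Rle_trans (pow_le_rising _ _ (Rlt_le _ _ pot_pos)).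
by apply: pow_incr; lra.
Qed.

Lemma rising_pot_born_le {g x} m : degree g x = k -> rising (pot k x g) m <= INR m.+1`!.
Proof.
move=> x_deg; rewrite -rising_two; apply: rising_le; rewrite /pot x_deg Rminus_diag Rplus_0_l.
split; first exact/Rlt_le/Rdiv_lt_0_compat/k1_gt0/lt_0_INR/ltP/ltnW.
apply/Rcomplements.Rle_div_l => //; rewrite minus_INR; last exact/leP/ltnW.
have : 2 <= INR k by apply/(le_INR 2)/leP.
by change (INR 1) with 1; lra.
Qed.

Lemma expect_rising_pot {g x t} m r : ktree_inv k g t -> vertex_inv k g x ->
  expect k r g (fun g => rising (pot k x g) m) = rising (pot k x g) m * drift_prod k m t r.
Proof.
have k_gt0 : (0 < k)%nat by lia.
elim: r g t => [|r IH] g t g_inv x_inv /=; first ring.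
transitivity (mean (kcliques k g) (fun c => drift_prod k m t.+1 r * rising (pot k x (step g c)) m)).
  apply: eq_in_mean => c cg /=; have [_ gb _] := g_inv.
  by rewrite (IH _ t.+1) 1?Rmult_comm; [| apply: ktree_inv_step | apply: vertex_inv_step].
by rewrite mean_scal (mean_rising_pot m g_inv x_inv); ring.
Qed.

Lemma expect_degree_rising {g x t a} m r : 0 < a -> ktree_inv k g t -> vertex_inv k g x ->
  expect k r g (fun g => if Rlt_dec (INR k + a) (INR (degree g x)) then 1 else 0)
  <= / a ^ m * (rising (pot k x g) m * drift_prod k m t r).
Proof.
move=> a_gt0 g_inv x_inv; rewrite -(expect_rising_pot m r g_inv x_inv) -expect_scal.
pose P g' := exists t', ktree_inv k g' t' /\ vertex_inv k g' x.
apply: (expect_le_inv k P); last by exists t.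
  move=> g' c [t' [g'_inv x'_inv]] cg'; have [_ g'b _] := g'_inv; exists t'.+1.
  by split; [apply: ktree_inv_step | apply: vertex_inv_step]; rewrite // ltnW.
by move=> g' [_ [_ [_ x'deg _]]]; apply: indicator_le_rising.
Qed.

End Potential.

Lemma drift_prod_ge1 k m t r : 1 <= drift_prod k m t r.
Proof.
elim: r t => [|r IH] t /=; first lra.
have : 0 <= INR m * INR (k - 1) / INR (1 + k * t).
  by apply: Rmult_le_pos; [apply: Rmult_le_pos; apply: pos_INR | apply/Rlt_le/Rinv_0_lt_compat/lt_0_INR; lia].
by have := IH t.+1; rewrite /drift; nra.
Qed.

Section DriftProduct.

Variables k p : nat.
Hypothesis k_gt0 : (0 < k)%nat.

Let k_pos : 0 < INR k.
Proof. exact/lt_0_INR/ltP. Qed.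

Let shifted_gt0 t : 0 < INR t + / INR k.
Proof. by have := pos_INR t; have := Rinv_0_lt_compat _ k_pos; lra. Qed.

Lemma drift_rising t :
  drift k (k * p) t * rising (INR t + / INR k) (p * (k - 1)) = rising (INR t.+1 + / INR k) (p * (k - 1)).
Proof.
have a_gt0 := shifted_gt0 t; set a := INR t + / INR k.
have drift_a : drift k (k * p) t * a = a + INR (p * (k - 1)).
  have t_ge0 := pos_INR t.
  rewrite /drift /a !mult_INR plus_INR mult_INR /=; field.
  by split; [lra | nra].
have -> : INR t.+1 + / INR k = a + 1 by rewrite S_INR /a; ring.
apply: (Rmult_eq_reg_r a); last exact: Rgt_not_eq.
by rewrite rising_shift -drift_a; ring.
Qed.

Lemma drift_prod_rising t r :
  drift_prod k (k * p) t r * rising (INR t + / INR k) (p * (k - 1)) =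
  rising (INR (t + r) + / INR k) (p * (k - 1)).
Proof.
elim: r t => [|r IH] t /=; first by rewrite addn0; ring.
by rewrite Rmult_comm -Rmult_assoc [rising _ _ * _]Rmult_comm drift_rising Rmult_comm IH addSnnS.
Qed.

Lemma drift_prod_le j r : (0 < j)%nat ->
  drift_prod k (k * p) j r <= (INR (j + r) / INR j) ^ (p * (k - 1)).
Proof.
move=> j_gt0; have j_pos : 0 < INR j by apply/lt_0_INR/ltP.
have rising_pos := rising_gt0 (p * (k - 1)) (shifted_gt0 j).
apply: (Rmult_le_reg_r _ _ _ rising_pos); rewrite drift_prod_rising.
apply: rising_ratio; last exact/Rlt_le/Rinv_0_lt_compat.
by split=> //; apply/le_INR/leP/leq_addr.
Qed.

End DriftProduct.

Section ExpBound.
Import Coquelicot.Coquelicot.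

Lemma one_sub_mul_exp_le {z} : 0 <= z -> (1 - z) * exp (2 * z) <= 1 + z.
Proof.
move=> z_ge0; pose psi y := (1 + y) * exp (- (2 * y)) - (1 - y).
have psi_der y : derivable_pt_lim psi y (1 - (1 + 2 * y) * exp (- (2 * y))).
  by apply/is_derive_Reals; rewrite /psi; auto_derive => //; ring.
have psi_der_ge0 y : 0 <= 1 - (1 + 2 * y) * exp (- (2 * y)).
  rewrite exp_Ropp; have := exp_ineq1_le (2 * y); have := exp_pos (2 * y) => e_gt0 e_ge.
  suff : (1 + 2 * y) * / exp (2 * y) <= 1 by lra.
  by apply/Rcomplements.Rle_div_l; lra.
have psi_ge0 : 0 <= psi z.
  have psi0 : psi 0 = 0 by rewrite /psi Rmult_0_r Ropp_0 exp_0; ring.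
  case: (Rle_lt_or_eq_dec _ _ z_ge0) => [z_gt0|<-]; last by rewrite psi0; lra.
  have [y [psi_mvt _]] := MVT_cor2 psi _ 0 z z_gt0 (fun y _ => psi_der y).
  by move: psi_mvt; rewrite psi0; have := psi_der_ge0 y; nra.
have e_pos := exp_pos (2 * z); rewrite /psi exp_Ropp in psi_ge0.
suff : 1 - z <= (1 + z) / exp (2 * z) by move/Rcomplements.Rle_div_r; lra.
by rewrite /Rdiv; lra.
Qed.

End ExpBound.

Lemma exp_pow_nat x n : exp x ^ n = exp (INR n * x).
Proof. by rewrite -Rpower_pow; [rewrite /Rpower ln_exp | exact: exp_pos]. Qed.

Lemma exp2_mul_pow_le q : (1 <= q)%nat -> exp 2 * INR q ^ (2 * q + 1) <= INR q.+1 ^ (2 * q + 1).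
Proof.
move=> q_ge1; set Q := INR q; have Q_ge1 : 1 <= Q by apply/(le_INR 1)/leP.
set z := / (2 * Q + 1); have z_gt0 : 0 < z by apply: Rinv_0_lt_compat; lra.
have z_def : z * (2 * Q + 1) = 1 by rewrite /z Rinv_l; lra.
have := one_sub_mul_exp_le (Rlt_le _ _ z_gt0).
have -> : 1 - z = 2 * Q * z by nra.
have -> : 1 + z = (2 * Q + 2) * z by nra.
move=> ineq; have base : Q * exp (2 * z) <= Q + 1 by nra.
have base_ge0 : 0 <= Q * exp (2 * z) by have := exp_pos (2 * z); nra.
have := pow_incr _ _ (2 * q + 1) (conj base_ge0 base).
rewrite Rpow_mult_distr exp_pow_nat S_INR -/Q.
have -> : INR (2 * q + 1) * (2 * z) = 2 by rewrite plus_INR mult_INR /= -/Q; nra.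
by rewrite Rmult_comm.
Qed.

(* q!^2 e^(2q) / q^(2q+1) is nonincreasing by exp2_mul_pow_le and equals e^2 at q = 1. *)
Lemma fact_sq_exp_le {q} : (1 <= q)%nat ->
  INR q`! ^ 2 * exp (2 * INR q) <= exp 2 * INR q ^ (2 * q + 1).
Proof.
elim: q => [//|[|q] IH _]; first by rewrite /= !Rmult_1_r !Rmult_1_l; lra.
have Q_ge0 := pos_INR q.+2; have e2_gt0 := exp_pos 2.
have -> : (2 * q.+2 + 1 = 2 + (2 * q.+1 + 1))%nat by lia.
rewrite factS mult_INR pow_add (S_INR q.+1) Rmult_plus_distr_l exp_plus -S_INR.
apply: Rle_trans (_ : INR q.+2 ^ 2 * exp 2 * (exp 2 * INR q.+1 ^ (2 * q.+1 + 1)) <= _).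
  have -> : (INR q.+2 * INR q.+1`!) ^ 2 * (exp (2 * INR q.+1) * exp (2 * 1)) =
            INR q.+2 ^ 2 * exp 2 * (INR q.+1`! ^ 2 * exp (2 * INR q.+1)) by rewrite Rmult_1_r; ring.
  by apply: Rmult_le_compat_l; [nra | exact: IH].
move: (exp2_mul_pow_le q.+1 (ltn0Sn q)) => /(Rmult_le_compat_l (INR q.+2 ^ 2 * exp 2)) le.
by apply: Rle_trans (le _) _; [nra | right; ring].
Qed.

Lemma fact_le_stirling {q} : (1 <= q)%nat ->
  INR q`! <= exp 1 * sqrt (INR q) * INR q ^ q * exp (- INR q).
Proof.
move=> q_ge1; have Q_gt0 : 0 < INR q by apply/lt_0_INR/ltP.
have bound_ge0 : 0 <= exp 1 * sqrt (INR q) * INR q ^ q * exp (- INR q).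
  have := exp_pos 1; have := exp_pos (- INR q); have := sqrt_pos (INR q).
  have := pow_lt _ q Q_gt0; move=> *; repeat apply: Rmult_le_pos; lra.
apply: Rsqr_incr_0_var => //; rewrite /Rsqr.
apply: (Rmult_le_reg_r (exp (2 * INR q))); first exact: exp_pos.
apply: Rle_trans (_ : exp 2 * INR q ^ (2 * q + 1) <= _).
  by have := fact_sq_exp_le q_ge1; rewrite /= Rmult_1_r.
have e1 : exp 1 * exp 1 = exp 2 by rewrite -exp_plus; congr exp; ring.
have eq : exp (- INR q) * exp (- INR q) * exp (2 * INR q) = 1.
  by rewrite -!exp_plus -exp_0; congr exp; ring.
have -> : (2 * q + 1 = q + q + 1)%nat by lia.
have sq : sqrt (INR q) * sqrt (INR q) = INR q by apply: sqrt_sqrt; lra.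
right; rewrite !pow_add pow_1.
transitivity (exp 1 * exp 1 * (sqrt (INR q) * sqrt (INR q)) * (INR q ^ q * INR q ^ q) *
              (exp (- INR q) * exp (- INR q) * exp (2 * INR q))); last ring.
by rewrite e1 sq eq; ring.
Qed.

Lemma fact_addn_le (q i b : nat) : (q + i <= b)%nat -> ((q + i)`! <= q`! * expn b i)%nat.
Proof.
elim: i => [|i IH] le_b; first by rewrite addn0 muln1.
have lt_b : (q + i < b)%nat by rewrite -addnS.
by rewrite addnS factS expnS mulnCA leq_mul // IH // ltnW.
Qed.

Lemma INR_expn (a b : nat) : INR (expn a b) = INR a ^ b.
Proof. by elim: b => [|b IH]; rewrite ?expn0 // expnS mult_INR IH. Qed.

Definition tail_const k q : R := exp 1 * INR (k + 1) ^ k * INR q * sqrt (INR q) * exp (- INR q).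

Lemma fact_div_pow_le (k q m : nat) : (1 <= q)%nat -> (q <= m < q + k)%nat ->
  INR m.+1`! / INR q ^ m <= tail_const k q.
Proof.
move=> q_ge1 /andP[qm mk]; set i := (m.+1 - q)%nat.
have Q_ge1 : 1 <= INR q by apply/(le_INR 1)/leP.
have fact_le : INR m.+1`! <= INR q`! * INR (k + 1) ^ i * INR q ^ i.
  have -> : m.+1 = (q + i)%nat by rewrite /i; lia.
  move: (fact_addn_le q i ((k + 1) * q) (ltac:(rewrite /i; nia))) => /leP/le_INR.
  by rewrite mult_INR INR_expn mult_INR Rpow_mult_distr Rmult_assoc.
have pow_m : INR q ^ m * INR q = INR q ^ q * INR q ^ i.
  by rewrite -pow_add -{2}(pow_1 (INR q)) -pow_add; congr pow; rewrite /i; lia.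
have k_pow : INR (k + 1) ^ i <= INR (k + 1) ^ k.
  by apply: Rle_pow; [rewrite plus_INR /=; have := pos_INR k; lra | apply/leP; rewrite /i; lia].
have stirling := fact_le_stirling q_ge1.
apply/Rcomplements.Rle_div_l; first by apply: pow_lt; lra.
apply: Rle_trans fact_le _.
have -> : exp 1 * INR (k + 1) ^ k * INR q * sqrt (INR q) * exp (- INR q) * INR q ^ m =
          exp 1 * sqrt (INR q) * INR q ^ q * exp (- INR q) * INR (k + 1) ^ k * INR q ^ i.
  transitivity (exp 1 * sqrt (INR q) * exp (- INR q) * INR (k + 1) ^ k * (INR q ^ m * INR q)).
    by ring.
  by rewrite pow_m; ring.
apply: Rmult_le_compat_r; first by apply: pow_le; lra.
by apply: Rmult_le_compat => //; [exact: pos_INR | apply/pow_le/pos_INR].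
Qed.

Lemma Rpower_pow_mul x y N : 0 < x -> Rpower x y ^ N = Rpower x (y * INR N).
Proof. by move=> x_gt0; rewrite -Rpower_pow ?Rpower_mult //; apply: exp_pos. Qed.

Definition degree_threshold k n j q : R :=
  INR k + INR q * Rpower (INR n / INR j) (INR (k - 1) / INR k).

Lemma mul_between q k : (0 < k)%nat -> exists p, (q <= k * p < q + k)%nat.
Proof.
move=> k_gt0; exists ((q + k - 1) %/ k).
by have := divn_eq (q + k - 1) k; have := ltn_pmod (q + k - 1) k_gt0; lia.
Qed.

Lemma expect_degree_tail k g x j n q : (1 < k)%nat -> (0 < j <= n)%nat -> (0 < q)%nat ->
  ktree_inv k g j -> vertex_inv k g x -> degree g x = k ->
  expect k (n - j) g
    (fun g => if Rlt_dec (degree_threshold k n j q) (INR (degree g x)) then 1 else 0)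
  <= tail_const k q.
Proof.
move=> k_gt1 /andP[j_gt0 jn] q_gt0 g_inv x_inv x_deg; have [_ xdeg _] := x_inv.
(* A multiple of k makes the drift product telescope; m close to q makes Markov's bound sharp. *)
have [p /andP[qm mk]] := mul_between q k (ltnW k_gt1); set m := (k * p)%nat.
set s := Rpower (INR n / INR j) (INR (k - 1) / INR k).
have nj_gt0 : 0 < INR n / INR j by apply: Rdiv_lt_0_compat; apply/lt_0_INR/ltP; lia.
have qs_gt0 : 0 < INR q * s by apply: Rmult_lt_0_compat; [apply/lt_0_INR/ltP | apply: exp_pos].
apply: Rle_trans (expect_degree_rising _ k_gt1 m (n - j) qs_gt0 g_inv x_inv) _.
have s_pow : s ^ m = (INR n / INR j) ^ (p * (k - 1)).
  rewrite /s Rpower_pow_mul // -Rpower_pow //; congr Rpower.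
  by rewrite /m !mult_INR; field; apply: not_0_INR; lia.
have drift_le : drift_prod k m j (n - j) <= s ^ m.
  by rewrite s_pow -{2}(subnKC jn); apply: drift_prod_le => //; lia.
have rising_bound := rising_pot_born_le _ k_gt1 m x_deg.
have drift_ge0 : 0 <= drift_prod k m j (n - j) by have := drift_prod_ge1 k m j (n - j); lra.
have sm_gt0 : 0 < s ^ m by apply/pow_lt/exp_pos.
have qm_gt0 : 0 < INR q ^ m by apply/pow_lt/lt_0_INR/ltP.
apply: Rle_trans (fact_div_pow_le k q m q_gt0 (introT andP (conj qm mk))).
rewrite Rpow_mult_distr Rinv_mult /Rdiv Rmult_assoc [INR _ * / _]Rmult_comm.
apply: Rmult_le_compat_l; first exact/Rlt_le/Rinv_0_lt_compat.
apply: Rle_trans (_ : / s ^ m * (INR m.+1`! * s ^ m) <= _); last by right; field; lra.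
apply: Rmult_le_compat_l; first exact/Rlt_le/Rinv_0_lt_compat.
by apply: Rmult_le_compat => //; exact/Rlt_le/rising_gt0/(pot_gt0 _ k_gt1 xdeg).
Qed.

Definition history_inv k (h : seq graph) : Prop :=
  [/\ (0 < size h)%nat, ktree_inv k (last (G0 k) h) (size h).-1 &
      (0 < (size h).-1)%nat -> vertex_inv k (last (G0 k) h) (born k (size h).-1) /\
                               degree (last (G0 k) h) (born k (size h).-1) = k].

Lemma history_inv_G0 k : history_inv k [:: G0 k].
Proof. by split=> //; apply: ktree_inv_G0. Qed.

Lemma history_inv_step k h c : (0 < k)%nat -> history_inv k h ->
  c \in kcliques k (last (G0 k) h) -> history_inv k (rcons h (step (last (G0 k) h) c)).
Proof.
move=> k_gt0 [h_gt0 g_inv _] cg; have [gv gb _] := g_inv.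
rewrite /history_inv size_rcons last_rcons /=; split=> // [|_].
  by rewrite -(prednK h_gt0); apply: ktree_inv_step.
have -> : born k (size h) = (last (G0 k) h).1 by rewrite gv /born; lia.
by split; [apply: vertex_inv_new | apply: degree_step_new].
Qed.

Lemma prT_degree_tail_le k j n q (H : graph) h : (1 < k)%nat -> (0 < j <= n)%nat -> (0 < q)%nat ->
  history_inv k h -> size h = j.+1 ->
  prT k (n - j) h (fun h => sameG (Gat k h j) H &&
      Rlt_dec (degree_threshold k n j q) (INR (degree (Gat k h n) (born k j))))
  <= tail_const k q * prT k (n - j) h (fun h => sameG (Gat k h j) H).
Proof.
move=> k_gt1 /andP[j_gt0 jn] q_gt0 [_ g_inv x_new] h_size.
have Gat_j t : size t = (n - j)%nat -> Gat k (h ++ t) j = Gat k h j.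
  by move=> _; rewrite /Gat nth_cat h_size ltnSn.
have Gat_n t : size t = (n - j)%nat -> Gat k (h ++ t) n = last (G0 k) (h ++ t).
  by move=> t_size; rewrite /Gat -nth_last size_cat h_size t_size; congr nth; lia.
set b := sameG (Gat k h j) H.
rewrite (@prT_ext k (n - j) h _ (fun h' => b && Rlt_dec (degree_threshold k n j q)
                                  (INR (degree (last (G0 k) h') (born k j))))); last first.
  by move=> t t_size; rewrite Gat_j ?Gat_n.
rewrite [X in _ <= _ * X](@prT_ext k (n - j) h _ (fun _ => b)); last by move=> t t_size; rewrite Gat_j.
rewrite h_size /= in g_inv x_new; have k_gt0 : (0 < k)%nat by lia.
case: b.
  rewrite (prT_last k (n - j) h (fun g => Rlt_dec (degree_threshold k n j q) (INR (degree g (born k j))))).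
  rewrite (prT_last k (n - j) h predT) (expect_cst _ k_gt0 1 g_inv) Rmult_1_r.
  by have [x_inv x_deg] := x_new j_gt0; apply: expect_degree_tail; rewrite ?j_gt0.
by rewrite (prT_last k (n - j) h pred0) (expect_cst _ k_gt0 0 g_inv) Rmult_0_r; right.
Qed.

Lemma tail_const_gt0 k q : (0 < q)%nat -> 0 < tail_const k q.
Proof.
move=> q_gt0; have q_pos : 0 < INR q by apply/lt_0_INR/ltP.
have := exp_pos 1; have := exp_pos (- INR q); have := sqrt_lt_R0 _ q_pos.
have := pow_lt (INR (k + 1)) k (ltac:(apply/lt_0_INR/ltP; lia)).
by rewrite /tail_const => *; repeat apply: Rmult_lt_0_compat.
Qed.

Theorem lemma1 (k : nat) (hk : leq 2 k) :
  exists C : R, 0 < C /\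
  forall (j n q : nat) (H : graph),
    leq 1 j -> leq j n -> leq 1 q ->
    0 < probK k n (fun h => sameG (Gat k h j) H) ->
    probK k n (fun h => sameG (Gat k h j) H &&
        Rlt_dec (INR k + INR q * Rpower (INR n / INR j) (INR (k - 1) / INR k))
                (INR (degree (Gat k h n) (born k j))))
      / probK k n (fun h => sameG (Gat k h j) H)
    <= C * INR q * sqrt (INR q) * exp (- INR q).
Proof.
exists (exp 1 * INR (k + 1) ^ k); split.
  by apply: Rmult_lt_0_compat; [apply: exp_pos | apply/pow_lt/lt_0_INR/ltP; lia].
move=> j n q H j_gt0 jn q_gt0 cond_gt0; apply/Rcomplements.Rle_div_l => //.
have := prT_le_scale k (history_inv k) _ _ (tail_const k q) j (n - j) [:: G0 k].
rewrite subnKC //; apply.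
- exact/Rlt_le/tail_const_gt0.
- by move=> h c; apply: history_inv_step; lia.
- by move=> h h_inv h_size; apply: prT_degree_tail_le; rewrite ?j_gt0.
- exact: history_inv_G0.
Qed.
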